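(* Let $\mathcal{X}\subset\mathbb{R}^n$ be a convex connected domain containing $0$, let $K:\mathcal{X}\to\mathbb{R}$ be smooth with $\nabla^2K(x)>0$ for all $x$, let $\mathcal{U}=\mathbb{R}^m$, and let $V:\mathcal{X}\times\mathcal{U}\to\mathbb{R}$ be smooth with $$x^\top\frac{\partial V}{\partial x}(x,u)-u^\top\frac{\partial V}{\partial u}(x,u)\ge 0\quad\text{for all }x,u.$$ Consider the (nonlinear relaxation) system $$\nabla^2K(x)\,\dot x=-\frac{\partial V}{\partial x}(x,u),\qquad y=-\frac{\partial V}{\partial u}(x,u).$$ Then the system is passive with storage function $S(x):=K^*(\nabla K(x))$; that is, $S$ is bounded from below on $\mathcal{X}$ and $\nabla S(x)\dot x\le u^\top y$ for all $x\in\mathcal{X}$, $u\in\mathcal{U}$, where $\dot x=-(\nabla^2K(x))^{-1}\frac{\partial V}{\partial x}(x,u)$ and $y=-\frac{\partial V}{\partial u}(x,u)$.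
   Context: $K^*$ denotes the Legendre transform of $K$: with $\mathcal{Z}$ the image of the injective map $x\mapsto\nabla K(x)$, $K^*(z)=z^\top x-K(x)$ where $x$ solves $z=\nabla K(x)$ (equivalently $K^*(z)=\sup_x z^\top x-K(x)$ since $K$ is strictly convex). $\nabla$ denotes the gradient and $\nabla^2$ the Hessian. *)

From mathcomp Require Import all_boot all_order all_algebra.
From mathcomp Require Import all_classical all_reals all_analysis.
Set Implicit Arguments. Unset Strict Implicit. Unset Printing Implicit Defensive.
Import Order.TTheory GRing.Theory Num.Theory.
Import numFieldNormedType.Exports.
Local Open Scope classical_set_scope.
Local Open Scope ring_scope.

Section Defs.
Variable R : realType.

(* C^k on an open set A, via iterated directional derivatives: f is
   continuous at every point of A, and (for k+1) derivable at every point
   of A in every direction, with every directional derivative C^k on A.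
   (Existence and continuity of all directional derivatives up to order k
   on an open set of a finite-dimensional space is the usual C^k.) *)
Fixpoint Ck_on {V : normedModType R} (k : nat) (A : set V) (f : V -> R)
  : Prop :=
  match k with
  | 0 => forall x, A x -> {for x, continuous f}
  | k'.+1 => (forall x, A x -> {for x, continuous f}) /\
             (forall x v, A x -> derivable f x v) /\
             (forall v, Ck_on k' A ('D_v f))
  end.

Definition smooth_on {V : normedModType R} (A : set V) (f : V -> R) :=
  forall k, Ck_on k A f.

Definition evec {n : nat} (i : 'I_n) : 'rV[R]_n := delta_mx 0 i.

Definition grad {n : nat} (f : 'rV[R]_n -> R) (x : 'rV[R]_n) : 'rV[R]_n :=
  \row_i 'D_(evec i) f x.

Definition hessian {n : nat} (f : 'rV[R]_n -> R) (x : 'rV[R]_n) : 'M[R]_n :=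
  \matrix_(i, j) 'D_(evec i) ('D_(evec j) f) x.

Definition posdef {n : nat} (M : 'M[R]_n) :=
  forall v : 'rV[R]_n, v != 0 -> 0 < (v *m M *m v^T) 0 0.

Definition convex_sub {n : nat} (A : set 'rV[R]_n) :=
  forall x y (t : R), A x -> A y -> 0 <= t <= 1 -> A ((1 - t) *: x + t *: y).

(* Legendre transform of K (defined on A): K*(z) = z^T x - K(x) where x in A
   solves z = grad K x (x is unique when K is strictly convex). *)
Definition legendre {n : nat} (A : set 'rV[R]_n) (K : 'rV[R]_n -> R)
    (z : 'rV[R]_n) : R :=
  let x := xget 0 [set x | A x /\ grad K x = z] in (z *m x^T) 0 0 - K x.

Definition dVdx {n m : nat} (V : 'rV[R]_n * 'rV[R]_m -> R)
    (x : 'rV[R]_n) (u : 'rV[R]_m) : 'rV[R]_n :=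
  \row_i 'D_((evec i, 0)) V (x, u).

Definition dVdu {n m : nat} (V : 'rV[R]_n * 'rV[R]_m -> R)
    (x : 'rV[R]_n) (u : 'rV[R]_m) : 'rV[R]_m :=
  \row_i 'D_((0, evec i)) V (x, u).

End Defs.

(* Strict convexity makes t |-> 'D_(y - x) K (x + t (y - x)) strictly increasing on
   [0, 1], so grad K is injective on the convex set X and the storage function is
   S x = K^*(grad K x) = <grad K x, x> - K x.  The gradient inequality
   K 0 >= K x - <grad K x, x> bounds S below by - K 0, and differentiating gives
   grad S x = x^T hess K x, by symmetry of the Hessian.  Hence
   grad S . xdot = - <x, dV/dx> <= - <u, dV/du> = <u, y>.
   Smoothness is given by directional derivatives only, so linearity of v |-> 'D_v K x
   and the symmetry of second derivatives (Schwarz) are derived from the mean value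
   theorem. *)

From mathcomp Require Import all_boot all_order all_algebra.
From mathcomp Require Import all_classical all_reals all_analysis.
From mathcomp Require Import lra.
Import Order.TTheory GRing.Theory Num.Theory.
Import numFieldNormedType.Exports.
Local Open Scope classical_set_scope.
Local Open Scope ring_scope.

Section mean_value.
Context {R : realType}.

Lemma MVT_derivable (g : R -> R) {a b : R} : a <= b ->
  (forall t, a <= t <= b -> derivable g t 1) ->
  exists2 c, a <= c <= b & g b - g a = (b - a) * 'D_1 g c.
Proof.
move=> ab dg.
have dg_in t : t \in `]a, b[ -> is_derive t 1 g ('D_1 g t).
  by rewrite in_itv /= => /andP[ta tb]; apply/derivableP/dg; rewrite !ltW.
have g_cont : {within `[a, b], continuous g}.
  by apply: derivable_within_continuous => t; rewrite in_itv /=; exact: dg.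
have [c] := MVT_segment ab dg_in g_cont.
by rewrite in_itv /= => cab ->; exists c; rewrite // mulrC.
Qed.

Lemma MVT_between0 (g : R -> R) h :
  (forall t, `|t| <= `|h| -> derivable g t 1) ->
  exists2 c, `|c| <= `|h| & g h - g 0 = h * 'D_1 g c.
Proof.
move=> dg; have [h0|h0] := leP 0 h.
  have [|c /andP[c0 ch] E] := MVT_derivable g h0.
    by move=> t /andP[t0 th]; apply: dg; rewrite !ger0_norm.
  by exists c; rewrite ?ger0_norm // E subr0.
have [|c /andP[hc c0] E] := MVT_derivable g (ltW h0).
  by move=> t /andP[ht t0]; apply: dg; rewrite !ler0_norm ?lerN2 // ltW.
exists c; first by rewrite !ler0_norm ?lerN2 // ltW.
by rewrite -opprB E sub0r mulNr opprK.
Qed.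

Lemma nbhs0_normM_lt (c d : R) : 0 <= c -> 0 < d ->
  \forall h \near (0 : R)^', `|h| * c < d.
Proof.
move=> c0 d0; have c1 : 0 < c + 1 by rewrite ltr_wpDl.
near=> h; have : `|h| < d / (c + 1).
  by near: h; apply: dnbhs0_lt; rewrite divr_gt0.
rewrite ltr_pdivlMr // => hd; apply: le_lt_trans hd.
by rewrite ler_wpM2l // lerDl.
Unshelve. all: by end_near.
Qed.

End mean_value.

Lemma sub_swap (R : zmodType) (x y z t : R) : x - y - (z - t) = x - z - (y - t).
Proof. by rewrite !opprB addrACA [RHS]addrACA [- z + _]addrC. Qed.

Section directional_derivative.
Context {R : realType} {V : normedModType R}.

Lemma open_normP {X : set V} {y : V} : open X -> X y ->
  exists2 r : R, 0 < r & forall z, `|y - z| < r -> X z.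
Proof.
rewrite openE => oX /oX /nbhs_ballP[r r0 yX].
by exists r => // z yz; apply: yX; rewrite -ball_normE.
Qed.

Lemma continuous_normP {g : V -> R} {x : V} {e : R} : {for x, continuous g} -> 0 < e ->
  exists2 r : R, 0 < r & forall z, `|x - z| < r -> `|g x - g z| < e.
Proof.
move=> /cvgrPdist_lt/[apply] /nbhs_ballP[r r0 xg].
by exists r => // z xz; apply: xg; rewrite -ball_normE.
Qed.

Lemma dist_offset_le (a b x : V) {t s h : R} : `|t| <= `|h| -> `|s| <= `|h| ->
  `|x - (t *: a + (s *: b + x))| <= `|h| * (`|a| + `|b|).
Proof.
move=> th sh; rewrite addrA opprD addrCA subrr addr0 normrN mulrDr.
by apply: (le_trans (ler_normD _ _)); rewrite !normrZ lerD // ler_wpM2r.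
Qed.

Section line.
Context {W : normedModType R}.
Variables (f : V -> W) (y w : V) (t : R).

Let line_quotientE : (fun h : R =>
    h^-1 *: (((fun s => f (s *: w + y)) \o shift t) (h *: 1) - f (t *: w + y))) =
  (fun h => h^-1 *: ((f \o shift (t *: w + y)) (h *: w) - f (t *: w + y))).
Proof. by apply/funext => h /=; rewrite [h *: 1]mulr1 scalerDl addrA. Qed.

Lemma derivable_line :
  derivable (fun s : R => f (s *: w + y)) t 1 = derivable f (t *: w + y) w.
Proof. by rewrite /derivable /= line_quotientE. Qed.

Lemma derive_line :
  'D_1 (fun s : R => f (s *: w + y)) t = 'D_w f (t *: w + y).
Proof. by rewrite /derive /= line_quotientE. Qed.

End line.

Lemma derive_dirZ (f : V -> R) y v a : derivable f y v ->
  'D_(a *: v) f y = a * 'D_v f y.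
Proof.
move=> dfv; pose g s := f (s *: v + y).
have mul_a : is_derive (0 : R) 1 (fun s => a * s) (a *: 1) by exact: is_deriveZ.
have dg : derivable g (a * 0) 1 by rewrite mulr0 /g derivable_line scale0r add0r.
have DaE : 'D_(a *: v) f y = 'D_1 (g \o (fun s => a * s)) 0.
  have -> : g \o (fun s => a * s) = (fun s : R => f (s *: (a *: v) + y)).
    by apply/funext => s; rewrite /g /= scalerA mulrC.
  by rewrite derive_line scale0r add0r.
have DvE : 'D_v f y = 'D_1 g 0 by rewrite /g derive_line scale0r add0r.
have := derive1_comp ex_derive dg; rewrite !derive1E mulr0 derive_val => compE.
by rewrite DaE DvE compE -[a *: 1]/(a * 1) mulr1 mulrC.
Qed.

Lemma MVT_dir (f : V -> R) p w h :
  (forall t, `|t| <= `|h| -> derivable f (t *: w + p) w) ->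
  exists2 c, `|c| <= `|h| & f (h *: w + p) - f p = h * 'D_w f (c *: w + p).
Proof.
move=> df; have [|c ch E] := MVT_between0 (fun s => f (s *: w + p)) h.
  by move=> t th; rewrite derivable_line; exact: df.
by exists c; rewrite // -derive_line -E scale0r add0r.
Qed.

Lemma derive_dirD {f : V -> R} {X : set V} {y : V} (v : V) {w : V} : open X -> X y ->
  (forall z u, X z -> derivable f z u) -> {for y, continuous ('D_w f)} ->
  'D_(v + w) f y = 'D_v f y + 'D_w f y.
Proof.
move=> oX Xy df cw.
have [r r0 rX] := open_normP oX Xy.
pose A h := h^-1 *: (f (h *: w + (h *: v + y)) - f (h *: v + y)).
pose B h := h^-1 *: (f (h *: v + y) - f y).
(* By the mean value theorem, [A h] is a value of ['D_w f] at a point close to [y]. *)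
have A_cvg : A @ 0^' --> 'D_w f y.
  apply/cvgrPdist_lt => e e0.
  have [r' r'0 Dw_near] := continuous_normP cw e0.
  have vw0 : 0 <= `|w| + `|v| by rewrite addr_ge0.
  near=> h.
  have hr : `|h| * (`|w| + `|v|) < Num.min r r'.
    by near: h; apply: nbhs0_normM_lt; rewrite // lt_min r0.
  have near_y t : `|t| <= `|h| ->
      `|y - (t *: w + (h *: v + y))| < Num.min r r'.
    by move=> th; exact: le_lt_trans (dist_offset_le w v y th (lexx `|h|)) hr.
  rewrite /A; have [|c ch ->] := MVT_dir f (h *: v + y) w h.
    by move=> t /near_y; rewrite lt_min => /andP[/rX + _]; exact: df.
  have hn0 : h != 0 by near: h; exact: nbhs_dnbhs_neq.
  rewrite scalerA mulVf // scale1r; apply: Dw_near.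
  by have := near_y c ch; rewrite lt_min => /andP[].
have quotientE : (fun h : R => h^-1 *: ((f \o shift y) (h *: (v + w)) - f y)) = A + B.
  apply/funext => h; have -> : (A + B) h = A h + B h by [].
  rewrite /A /B /= -scalerDr addrA subrK.
  by rewrite [h *: (v + w)]scalerDr (addrC (h *: v)) addrA.
rewrite /derive quotientE addrC; apply: cvg_lim => //.
exact: cvgD (df y v Xy) A_cvg.
Unshelve. all: by end_near.
Qed.

Lemma second_difference {K : V -> R} {X : set V} {x a b : V} {h : R} :
  (forall z, `|x - z| <= `|h| * (`|a| + `|b|) -> X z) ->
  (forall z u, X z -> derivable K z u) ->
  (forall z u, X z -> derivable ('D_a K) z u) ->
  exists2 z, `|x - z| <= `|h| * (`|a| + `|b|) &
    K (h *: a + (h *: b + x)) - K (h *: a + x) - (K (h *: b + x) - K x)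
      = h * (h * 'D_b ('D_a K) z).
Proof.
move=> ballX Kd DKd.
have inX t s : `|t| <= `|h| -> `|s| <= `|h| -> X (t *: a + (s *: b + x)).
  by move=> th sh; apply/ballX/dist_offset_le.
have inX1 t : `|t| <= `|h| -> X (t *: a + x).
  by move=> th; have := inX t 0 th; rewrite normr0 scale0r add0r; apply.
pose phi s := K (s *: a + (h *: b + x)) - K (s *: a + x).
have dphi t : `|t| <= `|h| -> derivable phi t 1.
  move=> th; apply: derivableB; rewrite derivable_line.
    exact/Kd/inX.
  exact/Kd/inX1.
have [c ch phiE] := MVT_between0 phi h dphi.
rewrite /phi deriveB ?(derive_line, derivable_line) in phiE; first last.
- exact/Kd/inX1.
- exact/Kd/inX.
have [|d dh DaE] := MVT_dir ('D_a K) (c *: a + x) b h.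
  by move=> t th; apply: DKd; rewrite addrCA; exact: inX.
exists (d *: b + (c *: a + x)); first by rewrite addrCA; exact: dist_offset_le.
by rewrite -DaE (addrCA (h *: b)) -phiE /phi !scale0r !add0r; lra.
Qed.

Lemma derive_dirC {K : V -> R} {X : set V} {x a b : V} : open X -> X x ->
  (forall z u, X z -> derivable K z u) ->
  (forall u z w, X z -> derivable ('D_u K) z w) ->
  (forall u w, {for x, continuous ('D_w ('D_u K))}) ->
  'D_b ('D_a K) x = 'D_a ('D_b K) x.
Proof.
move=> oX Xx Kd DKd D2Kc.
apply/eqP; rewrite -subr_eq0 -normr_le0; apply/ler_addgt0Pr => e e0.
rewrite add0r; have e2 : 0 < e / 2 by rewrite divr_gt0.
have [r r0 rX] := open_normP oX Xx.
have [r1 r10 Dab_near] := continuous_normP (D2Kc a b) e2.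
have [r2 r20 Dba_near] := continuous_normP (D2Kc b a) e2.
have [h [hn0 hr]] : exists h : R,
    h != 0 /\ `|h| * (`|a| + `|b|) < Num.min r (Num.min r1 r2).
  apply: (@filter_ex _ _ (Proper_dnbhs_numFieldType (0 : R))).
  near=> h; split; first by near: h; exact: nbhs_dnbhs_neq.
  by near: h; apply: nbhs0_normM_lt; rewrite ?addr_ge0 // !lt_min r0 r10.
move: hr; rewrite !lt_min => /andP[hr /andP[hr1 hr2]].
have [z1 z1x E1] := second_difference (fun z xz => rX z (le_lt_trans xz hr)) Kd (DKd a).
have hr' : `|h| * (`|b| + `|a|) < r by rewrite addrC.
have [z2 z2x E2] := second_difference (fun z xz => rX z (le_lt_trans xz hr')) Kd (DKd b).
(* E1 and E2 compute the same second difference, in the orders (a, b) and (b, a). *)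
have Dz12 : 'D_b ('D_a K) z1 = 'D_a ('D_b K) z2.
  have : h * (h * 'D_b ('D_a K) z1) = h * (h * 'D_a ('D_b K) z2).
    by apply: etrans (esym E1) _; rewrite -E2 (addrCA (h *: b)) sub_swap.
  by move/(mulfI hn0)/(mulfI hn0).
have := Dab_near z1 (le_lt_trans z1x hr1); rewrite Dz12 => A1.
have A2 : `|'D_a ('D_b K) x - 'D_a ('D_b K) z2| < e / 2.
  by apply/Dba_near/(le_lt_trans z2x); rewrite addrC.
have -> : 'D_b ('D_a K) x - 'D_a ('D_b K) x =
    ('D_b ('D_a K) x - 'D_a ('D_b K) z2) - ('D_a ('D_b K) x - 'D_a ('D_b K) z2).
  by rewrite opprB addrA subrK.
apply/ltW/(le_lt_trans (ler_normB _ _)).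
by rewrite [e]splitr; exact: ltrD A1 A2.
Unshelve. all: by end_near.
Qed.

End directional_derivative.

Lemma posdef_unitmx {R : realType} {n} (M : 'M[R]_n) : posdef M -> M \in unitmx.
Proof.
move=> pdM; rewrite unitmxE unitfE; apply/negP => /det0P[v vn0 vM].
by have := pdM v vn0; rewrite vM mul0mx mxE ltxx.
Qed.

Lemma near_eq_grad {R : realType} {n} {f g : 'rV[R]_n -> R} {x : 'rV[R]_n} :
  (\forall z \near x, f z = g z) -> grad f x = grad g x.
Proof. by move=> fg; apply/rowP => i; rewrite !mxE (near_eq_derive _ fg). Qed.

Section row_vector_derivatives.
Context {R : realType} {n : nat}.
Implicit Types (f : 'rV[R]_n -> R) (X : set 'rV[R]_n).

Global Instance is_derive_coord (j : 'I_n) (z v : 'rV[R]_n) :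
  is_derive z v (fun x : 'rV[R]_n => x 0 j) (v 0 j).
Proof.
have quotientE : \forall h \near (0 : R)^',
    h^-1 *: (((fun x : 'rV[R]_n => x 0 j) \o shift z) (h *: v) - z 0 j) = v 0 j.
  near=> h; have hn0 : h != 0 by near: h; exact: nbhs_dnbhs_neq.
  by rewrite /= !mxE addrK /GRing.scale /= mulrA mulVf // mul1r.
split; first exact: is_cvg_near_cst quotientE.
exact: lim_near_cst quotientE.
Unshelve. all: by end_near.
Qed.

Lemma derive_partials {f X y} v : open X -> X y ->
  (forall z u, X z -> derivable f z u) -> (forall u, {for y, continuous ('D_u f)}) ->
  'D_v f y = \sum_i v 0 i * 'D_(evec R i) f y.
Proof.
move=> oX Xy df Dfc; rewrite {1}(row_sum_delta v).
apply: (big_rec2 (fun a b => 'D_a f y = b)); first exact: derive0.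
move=> i a b _ <-.
by rewrite (derive_dirD _ oX Xy df (Dfc a)) derive_dirZ //; exact: df.
Qed.

Lemma derive_dir2_hessian {f X z} d : open X -> X z ->
  (forall z u, X z -> derivable f z u) ->
  (forall u z, X z -> {for z, continuous ('D_u f)}) ->
  (forall u z w, X z -> derivable ('D_u f) z w) ->
  (forall u w, {for z, continuous ('D_w ('D_u f))}) ->
  'D_d ('D_d f) z = (d *m hessian f z *m d^T) 0 0.
Proof.
move=> oX Xz df Dfc Dfd D2fc.
have Ddf_near : \forall z' \near z,
    'D_d f z' = (\sum_(j < n) (fun x => d 0 j * 'D_(evec R j) f x)) z'.
  have := open_nbhs_nbhs (conj oX Xz); apply: filter_app; near=> z' => Xz'.
  by rewrite fct_sumE (derive_partials d oX Xz' df) // => u; exact: Dfc.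
have DDdfE i : 'D_(evec R i) ('D_d f) z = \sum_j d 0 j * hessian f z i j.
  rewrite (near_eq_derive _ Ddf_near) derive_sum => [|j]; last first.
    by apply: derivableM => //; exact: Dfd.
  by apply: eq_bigr => j _; rewrite deriveMl ?mxE //; exact: Dfd.
rewrite (derive_partials d oX Xz (Dfd d) (D2fc d)).
under eq_bigr do rewrite DDdfE big_distrr.
rewrite [RHS]mxE exchange_big; apply: eq_bigr => j _ /=.
by rewrite !mxE big_distrl; apply: eq_bigr => i _; rewrite !mxE mulrCA mulrC.
Unshelve. all: by end_near.
Qed.

End row_vector_derivatives.

Lemma posdef_ge0 {R : realType} {n} (M : 'M[R]_n) (v : 'rV[R]_n) :
  posdef M -> 0 <= (v *m M *m v^T) 0 0.
Proof.
by move=> pdM; have [->|/pdM/ltW//] := eqVneq v 0; rewrite !mul0mx mxE.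
Qed.

Lemma convex_sub_segment {R : realType} {n} {X : set 'rV[R]_n} {x y} (t : R) :
  convex_sub X -> X x -> X y -> 0 <= t <= 1 -> X (t *: (y - x) + x).
Proof.
move=> cX Xx Xy t01; have := cX x y t Xx Xy t01.
by congr X; rewrite scalerBl scale1r scalerBr addrC addrA addrAC.
Qed.

Definition legendre_grad {R : realType} {n} (K : 'rV[R]_n -> R) (x : 'rV[R]_n) : R :=
  (grad K x *m x^T) 0 0 - K x.

Section convex_potential.
Context {R : realType} {n : nat} {X : set 'rV[R]_n} {K : 'rV[R]_n -> R}.
Hypotheses (oX : open X) (K2 : Ck_on 2 X K).

Let K_derivable z v : X z -> derivable K z v.
Proof. by case: K2 => _ [+ _]; apply. Qed.

Let DK_continuous u z : X z -> {for z, continuous ('D_u K)}.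
Proof. by case: K2 => _ [_ /(_ u)[+ _]]; apply. Qed.

Let DK_derivable u z v : X z -> derivable ('D_u K) z v.
Proof. by case: K2 => _ [_ /(_ u)[_ [+ _]]]; apply. Qed.

Let D2K_continuous u v {z} : X z -> {for z, continuous ('D_v ('D_u K))}.
Proof. by case: K2 => _ [_ /(_ u)[_ [_ /(_ v)]]]; apply. Qed.

Lemma hessian_sym {x} : X x -> (hessian K x)^T = hessian K x.
Proof.
move=> Xx; apply/matrixP => i j; rewrite !mxE.
exact: derive_dirC oX Xx K_derivable DK_derivable (fun u w => D2K_continuous u w Xx).
Qed.

Lemma derive_gradE {x} d : X x -> 'D_d K x = (grad K x *m d^T) 0 0.
Proof.
move=> Xx; rewrite (derive_partials d oX Xx K_derivable (DK_continuous ^~ x ^~ Xx)).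
by rewrite mxE; apply: eq_bigr => i _; rewrite !mxE mulrC.
Qed.

Lemma legendre_grad_sumE :
  legendre_grad K = \sum_(j < n) (fun z => 'D_(evec R j) K z * z 0 j) - K.
Proof.
apply/funext => z; rewrite /legendre_grad mxE fct_sumE.
by congr (_ - _); apply: eq_bigr => j _; rewrite !mxE.
Qed.

Lemma derivable_legendre_grad {x} v : X x -> derivable (legendre_grad K) x v.
Proof.
move=> Xx; rewrite legendre_grad_sumE; apply: derivableB; last exact: K_derivable.
apply: derivable_sum => j; apply: derivableM; first exact: DK_derivable.
exact: ex_derive.
Qed.

Lemma grad_legendre_grad {x} : X x -> grad (legendre_grad K) x = x *m hessian K x.
Proof.
move=> Xx; rewrite -(hessian_sym Xx); apply/rowP => i; rewrite !mxE.
have dterm j : derivable (fun z => 'D_(evec R j) K z * z 0 j) x (evec R i).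
  by apply: derivableM; [exact: DK_derivable | exact: ex_derive].
rewrite legendre_grad_sumE deriveB; last exact: K_derivable; last first.
  by apply: derivable_sum => j; exact: dterm.
rewrite derive_sum => [|j]; last exact: dterm.
under eq_bigr => j _.
  rewrite deriveM; [|exact: DK_derivable|exact: ex_derive].
  rewrite derive_val /GRing.scale /=.
  over.
rewrite big_split /= addrAC.
have -> : \sum_j 'D_(evec R j) K x * evec R i 0 j = 'D_(evec R i) K x.
  rewrite (bigD1 i) //= big1 => [|j ji]; first by rewrite !mxE !eqxx mulr1 addr0.
  by rewrite !mxE (negbTE ji) mulr0.
by rewrite subrr add0r; apply: eq_bigr => j _; rewrite !mxE.
Qed.

Hypotheses (cX : convex_sub X) (pdK : forall x, X x -> posdef (hessian K x)).

Section segment.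
Context {x y : 'rV[R]_n}.
Hypotheses (Xx : X x) (Xy : X y).

Let Xseg {t : R} : 0 <= t <= 1 -> X (t *: (y - x) + x).
Proof. exact: convex_sub_segment. Qed.

Let slope (t : R) := 'D_(y - x) K (t *: (y - x) + x).

Let is_derive_slope {t : R} : 0 <= t <= 1 ->
  is_derive t 1 slope (((y - x) *m hessian K (t *: (y - x) + x) *m (y - x)^T) 0 0).
Proof.
move=> t01; split.
  by rewrite (derivable_line ('D_(y - x) K)); exact/DK_derivable/Xseg.
rewrite (derive_line ('D_(y - x) K)) (derive_dir2_hessian _ oX (Xseg t01)) //.
exact: (fun u w => D2K_continuous u w (Xseg t01)).
Qed.

Let slope_derivable (t : R) : t \in `]0, 1[ -> derivable slope t 1.
Proof.
rewrite in_itv /= => /andP[t0 t1]; have t01 : 0 <= t <= 1 by rewrite !ltW.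
by have [] := is_derive_slope t01.
Qed.

Let slope_cont : {within `[0, 1], continuous slope}.
Proof.
apply: derivable_within_continuous => t; rewrite in_itv /= => t01.
by have [] := is_derive_slope t01.
Qed.

Let slope_derive1 (t : R) : t \in `]0, 1[ ->
  derive1 slope t = (((y - x) *m hessian K (t *: (y - x) + x) *m (y - x)^T) 0 0).
Proof.
rewrite in_itv /= derive1E => /andP[t0 t1]; have t01 : 0 <= t <= 1 by rewrite !ltW.
by have [_ ->] := is_derive_slope t01.
Qed.

Let posdef_segment {t : R} : t \in `]0, 1[ -> posdef (hessian K (t *: (y - x) + x)).
Proof. by rewrite in_itv /= => /andP[t0 t1]; apply/pdK/Xseg; rewrite !ltW. Qed.

Let slope0 : slope 0 = 'D_(y - x) K x.
Proof. by rewrite /slope scale0r add0r. Qed.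

Let slope1 : slope 1 = 'D_(y - x) K y.
Proof. by rewrite /slope scale1r subrK. Qed.

Lemma derive_dir_strict_mono : x != y -> 'D_(y - x) K x < 'D_(y - x) K y.
Proof.
move=> xy; have yx0 : y - x != 0 by rewrite subr_eq0 eq_sym.
rewrite -slope0 -slope1; apply: (gtr0_derive1_lt_cc slope_derivable _ slope_cont).
- by move=> t t01; rewrite slope_derive1 //; exact: posdef_segment t01 _ yx0.
- by rewrite in_itv /= lexx ler01.
- by rewrite in_itv /= lexx ler01.
- exact: ltr01.
Qed.

Lemma gradient_inequality : K x + 'D_(y - x) K x <= K y.
Proof.
have [|c /andP[c0 c1]] := MVT_derivable (fun s => K (s *: (y - x) + x)) ler01.
  by move=> t t01; rewrite (derivable_line K); exact/K_derivable/Xseg.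
rewrite (derive_line K) scale1r scale0r subrK add0r subr0 mul1r => KyE.
rewrite -lerBrDl KyE -slope0.
apply: (ger0_derive1_le_cc slope_derivable _ slope_cont).
- by move=> t t01; rewrite slope_derive1 //; exact/posdef_ge0/posdef_segment.
- by rewrite in_itv /= lexx ler01.
- by rewrite in_itv /= c0 c1.
- exact: c0.
Qed.

End segment.

Lemma grad_inj {x y} : X x -> X y -> grad K x = grad K y -> x = y.
Proof.
move=> Xx Xy gxy; apply/eqP/negPn/negP => xy.
by have := derive_dir_strict_mono Xx Xy xy; rewrite !derive_gradE // gxy ltxx.
Qed.

Lemma legendre_gradE {x} : X x -> legendre X K (grad K x) = legendre_grad K x.
Proof.
move=> Xx; rewrite /legendre /=.
suff -> : xget 0 [set z | X z /\ grad K z = grad K x] = x by [].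
by apply: xget_unique => [|z [Xz /(grad_inj Xz Xx)]].
Qed.

Lemma legendre_grad_ge {x y} : X x -> X y ->
  (grad K x *m y^T) 0 0 - K y <= legendre_grad K x.
Proof.
move=> Xx Xy; have := gradient_inequality Xx Xy.
rewrite derive_gradE // raddfB mulmxBr /legendre_grad !mxE; lra.
Qed.

End convex_potential.

Lemma mulmx_invmx_tr {R : comUnitRingType} {n} (a b : 'rV[R]_n) (M : 'M[R]_n) :
  M \in unitmx -> a *m M *m (b *m (invmx M)^T)^T = a *m b^T.
Proof. by move=> Mu; rewrite trmx_mul trmxK mulmxA -(mulmxA a) mulmxV ?mulmx1. Qed.

Theorem mainTheorem4 (R : realType) (n m : nat)
  (X : set 'rV[R]_n) (K : 'rV[R]_n -> R)
  (V : 'rV[R]_n * 'rV[R]_m -> R) :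
  open X -> connected X -> convex_sub X -> X 0 ->
  smooth_on X K ->
  (forall x, X x -> posdef (hessian K x)) ->
  smooth_on (X `*` setT) V ->
  (forall x u, X x ->
     0 <= (x *m (dVdx V x u)^T) 0 0 - (u *m (dVdu V x u)^T) 0 0) ->
  let S := fun x => legendre X K (grad K x) in
  (exists c : R, forall x, X x -> c <= S x) /\
  (forall x (u : 'rV[R]_m), X x ->
     let xdot := - (dVdx V x u *m (invmx (hessian K x))^T) in
     let y := - dVdu V x u in
     (forall v, derivable S x v) /\
     (grad S x *m xdot^T) 0 0 <= (u *m y^T) 0 0).
Proof.
move=> oX _ cX X0 sK pdK _ passive S.
have K2 := sK 2%N.
have SE x : X x -> S x = legendre_grad K x by exact: legendre_gradE.
split.
  exists (- K 0) => x Xx; rewrite SE //.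
  by have := legendre_grad_ge oX K2 cX pdK Xx X0; rewrite trmx0 mulmx0 mxE sub0r.
move=> x u Xx xdot y.
have S_near : \forall z \near x, legendre_grad K z = S z.
  by apply: filter_app (open_nbhs_nbhs (conj oX Xx)); near=> z => Xz; rewrite SE.
split => [v|].
  by apply: (near_eq_derivable S_near); exact: derivable_legendre_grad.
have -> : grad S x = x *m hessian K x.
  by rewrite -(grad_legendre_grad oX K2 Xx); apply/esym/near_eq_grad.
rewrite /xdot /y !raddfN /=.
rewrite mulmx_invmx_tr; last exact: posdef_unitmx (pdK x Xx).
rewrite [leLHS]mxE [leRHS]mxE lerN2.
by rewrite -subr_ge0; exact: passive.
Unshelve. all: by end_near.
Qed.
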